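(* Let $F$ be a commutative ring and $R$ an $F$-algebra with a descending filtration of ideals $R=I_0\supseteq I_1\supseteq I_2\supseteq\cdots$ such that $R/I_s$ is an artinian $F$-algebra for every $s$. Let $\overline{R}=\varprojlim R/I_j$ be the completion, with the inverse limit topology in which each $R/I_j$ is discrete. Then every finitely generated left ideal and every finitely generated right ideal of $\overline{R}$ is closed.
   Context: A descending filtration of $R$ is a sequence of ideals $R=I_0\supseteq I_1\supseteq\cdots$ with $\bigcap_t I_t=0$ and $I_sI_t\subseteq I_{s+t}$ for all $s,t$. $\overline{R}$ is a Hausdorff topological ring. *)

From HB Require Import structures.
From mathcomp Require Import all_boot all_order all_algebra.
Set Implicit Arguments. Unset Strict Implicit. Unset Printing Implicit Defensive.
Import GRing.Theory.
Local Open Scope ring_scope.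

Definition is_left_ideal (R : ringType) (L : R -> Prop) : Prop :=
  L 0 /\ (forall x y, L x -> L y -> L (x - y)) /\ (forall r x, L x -> L (r * x)).

Definition is_right_ideal (R : ringType) (L : R -> Prop) : Prop :=
  L 0 /\ (forall x y, L x -> L y -> L (x - y)) /\ (forall r x, L x -> L (x * r)).

Definition is_ideal (R : ringType) (L : R -> Prop) : Prop :=
  is_left_ideal L /\ is_right_ideal L.

Definition is_filtration (R : ringType) (I : nat -> R -> Prop) : Prop :=
  [/\ forall t, is_ideal (I t),
      forall x, I 0%N x,
      forall t x, I t.+1 x -> I t x,
      forall x, (forall t, I t x) -> x = 0
    & forall s t x y, I s x -> I t y -> I (s + t)%N (x * y)].

(* R/J is left artinian, expressed via the correspondence between left ideals
   of R/J and left ideals of R containing J: every descending chain of such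
   left ideals stabilizes. *)
Definition left_artinian_quot (R : ringType) (J : R -> Prop) : Prop :=
  forall L : nat -> R -> Prop,
    (forall k, is_left_ideal (L k)) ->
    (forall k x, J x -> L k x) ->
    (forall k x, L k.+1 x -> L k x) ->
    exists k0, forall k, (k0 <= k)%N -> forall x, L k x <-> L k0 x.

Definition right_artinian_quot (R : ringType) (J : R -> Prop) : Prop :=
  forall L : nat -> R -> Prop,
    (forall k, is_right_ideal (L k)) ->
    (forall k x, J x -> L k x) ->
    (forall k x, L k.+1 x -> L k x) ->
    exists k0, forall k, (k0 <= k)%N -> forall x, L k x <-> L k0 x.

(* The completion Rbar = lim R/I_j: an element is represented by a sequence
   x : nat -> R with x_{j+1} = x_j mod I_j (x_j represents the component in
   R/I_j); two representatives give the same element iff x_j = y_j mod I_j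
   for all j. *)
Definition compat (R : ringType) (I : nat -> R -> Prop) (x : nat -> R) : Prop :=
  forall j, I j (x j.+1 - x j).

Definition ceq (R : ringType) (I : nat -> R -> Prop) (x y : nat -> R) : Prop :=
  forall j, I j (x j - y j).

(* Closedness in the inverse limit topology (each R/I_j discrete): a basic
   neighbourhood of x is {y | y_s = x_s mod I_s}; S is closed iff it contains
   every point of Rbar all of whose neighbourhoods meet S. *)
Definition closed_Rbar (R : ringType) (I : nat -> R -> Prop)
    (S : (nat -> R) -> Prop) : Prop :=
  forall x, compat I x ->
    (forall s, exists y, [/\ compat I y, S y & I s (y s - x s)]) -> S x.

Definition fg_left_ideal (R : ringType) (I : nat -> R -> Prop) (n : nat)
    (a : 'I_n -> nat -> R) : (nat -> R) -> Prop :=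
  fun y => exists r : 'I_n -> nat -> R, (forall i, compat I (r i)) /\
    ceq I y (fun j => \sum_(i < n) r i j * a i j).

Definition fg_right_ideal (R : ringType) (I : nat -> R -> Prop) (n : nat)
    (a : 'I_n -> nat -> R) : (nat -> R) -> Prop :=
  fun y => exists r : 'I_n -> nat -> R, (forall i, compat I (r i)) /\
    ceq I y (fun j => \sum_(i < n) a i j * r i j).

From HB Require Import structures.
From mathcomp Require Import all_boot all_order all_algebra.
From Stdlib Require Import FunctionalExtensionality ClassicalEpsilon.
Set Implicit Arguments. Unset Strict Implicit. Unset Printing Implicit Defensive.
Import GRing.Theory.
Local Open Scope ring_scope.

(* If x lies in the closure of Rbar a_1 + ... + Rbar a_n, then for every t
   there are r in R^n with x_t = sum_i r_i a_i mod I_t, but these need not be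
   compatible as t varies.  For fixed s, the images in (R/I_s)^n of the
   syzygies at level t form a descending chain of submodules of the artinian
   module (R/I_s)^n, which stabilises from some level N on.  Correcting a
   level-t solution by a level-t syzygy then shows that the residue mod I_s of
   any level-N solution is the residue of a solution at every level.  Refining
   such residues one level at a time (dependent choice) yields a compatible
   family of coefficients, i.e. x lies in the ideal.  Right ideals are left
   ideals of the opposite ring. *)

Lemma downward_closed_le (P : nat -> Prop) :
  (forall t, P t.+1 -> P t) -> forall s t, (s <= t)%N -> P t -> P s.
Proof. by move=> hP s t /subnK <-; elim: (t - s)%N => // d IH /hP. Qed.

Lemma dependent_choice_nat (T : Type) (P : nat -> T -> Prop)
    (Q : nat -> T -> T -> Prop) :
  (exists x, P 0%N x) -> (forall s x, P s x -> exists2 y, P s.+1 y & Q s x y) ->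
  exists f : nat -> T, forall s, P s (f s) /\ Q s (f s) (f s.+1).
Proof.
move=> [x0 Px0] step.
have step' s (p : {x | P s x}) : {y | P s.+1 y /\ Q s (sval p) y}.
  apply: constructive_indefinite_description.
  by have [y Py Qy] := step s _ (svalP p); exists y.
pose fix f s : {x | P s x} :=
  if s is s'.+1 then exist _ _ (proj1 (svalP (step' s' (f s'))))
  else exist _ x0 Px0.
exists (fun s => sval (f s)) => s; split; first exact: svalP.
exact: (proj2 (svalP (step' s (f s)))).
Qed.

Section LeftIdeal.
Variables (R : nzRingType) (J : R -> Prop).
Hypothesis J_lideal : is_left_ideal J.

Lemma lideal0 : J 0. Proof. by case: J_lideal. Qed.

Lemma lidealB x y : J x -> J y -> J (x - y).
Proof. by case: J_lideal => _ [JB _]; apply: JB. Qed.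

Lemma lidealMl c x : J x -> J (c * x).
Proof. by case: J_lideal => _ [_ JM]; apply: JM. Qed.

Lemma lidealN x : J x -> J (- x).
Proof. by move=> Jx; rewrite -sub0r; apply: lidealB => //; apply: lideal0. Qed.

Lemma lidealD x y : J x -> J y -> J (x + y).
Proof.
by move=> Jx Jy; rewrite -[y]opprK; apply: lidealB => //; apply: lidealN.
Qed.

Lemma lideal_sum n (F : 'I_n -> R) : (forall i, J (F i)) -> J (\sum_(i < n) F i).
Proof.
by move=> JF; apply: (big_ind J); [apply: lideal0 | apply: lidealD | move=> i _].
Qed.

Lemma eqmod_refl u : J (u - u). Proof. by rewrite subrr; apply: lideal0. Qed.

Lemma eqmod_sym u v : J (u - v) -> J (v - u).
Proof. by move=> Juv; rewrite -opprB; apply: lidealN. Qed.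

Lemma eqmod_trans v u w : J (u - v) -> J (v - w) -> J (u - w).
Proof. by move=> Juv Jvw; rewrite -[u](subrK v) -addrA; apply: lidealD. Qed.

Lemma eqmodB u u' v v' : J (u - u') -> J (v - v') -> J ((u - v) - (u' - v')).
Proof.
move=> Ju Jv; have -> : u - v - (u' - v') = (u - u') - (v - v').
  by rewrite !opprB addrACA [RHS]addrACA [- u' + _]addrC.
exact: lidealB.
Qed.

End LeftIdeal.

Definition is_left_submod (R : nzRingType) n (M : ('I_n -> R) -> Prop) :=
  [/\ M (fun _ => 0), forall u v, M u -> M v -> M (fun i => u i - v i)
    & forall c u, M u -> M (fun i => c * u i)].

Lemma left_artinian_quot_pow (R : nzRingType) (J : R -> Prop) :
  is_left_ideal J -> left_artinian_quot J ->
  forall n (M : nat -> ('I_n -> R) -> Prop), (forall k, is_left_submod (M k)) ->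
  (forall k v, (forall i, J (v i)) -> M k v) -> (forall k v, M k.+1 v -> M k v) ->
  exists k0, forall k, (k0 <= k)%N -> forall v, M k v <-> M k0 v.
Proof.
move=> J_lideal J_art; elim=> [|n IH] M M_submod M_J M_succ.
  by exists 0%N => k _ v; split=> _; apply: M_J => -[].
have M_le k k' v : (k <= k')%N -> M k' v -> M k v.
  exact: (@downward_closed_le (M^~ v) (M_succ^~ v)).
pose L k c := exists2 v, M k v & v ord_max = c.
pose N k (w : 'I_n -> R) :=
  exists2 v, M k v & v ord_max = 0 /\ forall j, v (lift ord_max j) = w j.
have [k1 L_stable] :
    exists k1, forall k, (k1 <= k)%N -> forall c, L k c <-> L k1 c.
  apply: J_art => [k | k c Jc | k c [v Mv <-]].
  - have [M0 MB MM] := M_submod k; split; last split.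
    + by exists (fun _ => 0).
    + move=> _ _ [v1 Mv1 <-] [v2 Mv2 <-].
      by exists (fun i => v1 i - v2 i); first exact: MB.
    + by move=> c _ [v Mv <-]; exists (fun i => c * v i); first exact: MM.
  - exists (fun i => if i == ord_max then c else 0); last by rewrite eqxx.
    by apply: M_J => i; case: eqP => _ //; apply: lideal0.
  - by exists v => //; apply: M_succ.
have [k2 N_stable] :
    exists k2, forall k, (k2 <= k)%N -> forall w, N k w <-> N k2 w.
  apply: IH => [k | k w Jw | k w [v Mv v_eq]].
  - have [M0 MB MM] := M_submod k; split.
    + by exists (fun _ => 0).
    + move=> w1 w2 [v1 Mv1 [e1 h1]] [v2 Mv2 [e2 h2]].
      exists (fun i => v1 i - v2 i); first exact: MB.
      by rewrite e1 e2 subr0; split=> // j; rewrite h1 h2.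
    + move=> c w [v Mv [e h]].
      exists (fun i => c * v i); first exact: MM.
      by rewrite e mulr0; split=> // j; rewrite h.
  - exists (fun i => if unlift ord_max i is Some j then w j else 0).
      by apply: M_J => i; case: unlift => [j|]; [apply: Jw | apply: lideal0].
    by rewrite unlift_none; split=> // j; rewrite liftK.
  - by exists v => //; apply: M_succ.
exists (maxn k1 k2) => k le_k v; split; first exact: M_le.
have [le_k1 le_k2] : (k1 <= k)%N /\ (k2 <= k)%N.
  by split; apply: leq_trans le_k; rewrite ?leq_maxl ?leq_maxr.
have [M0 MB _] := M_submod k.
move=> Mv; have [w Mw w_max] : L k (v ord_max).
  by apply/(L_stable _ le_k1)/(L_stable _ (leq_maxl k1 k2)); exists v.
have [u Mu [u_max u_lift]] :
    N k (fun j => v (lift ord_max j) - w (lift ord_max j)).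
  apply/(N_stable _ le_k2)/(N_stable _ (leq_maxr k1 k2)).
  exists (fun i => v i - w i); last by rewrite w_max subrr.
  by have [_ MB' _] := M_submod (maxn k1 k2); apply: MB' => //; apply: M_le Mw.
have -> : v = fun i => u i - (0 - w i).
  apply: functional_extensionality => i; rewrite sub0r opprK.
  by case: (unliftP ord_max i) => [j ->|->]; rewrite ?u_lift ?subrK // u_max add0r.
by apply: (MB) => //; apply: MB.
Qed.

Section CompatibleSolution.
Variables (R : nzRingType) (I : nat -> R -> Prop).
Hypotheses (I_ideal : forall t, is_ideal (I t))
  (I_succ : forall t y, I t.+1 y -> I t y)
  (I_art : forall s, left_artinian_quot (I s)).
Variables (n : nat) (a : 'I_n -> nat -> R) (x : nat -> R).
Hypotheses (a_compat : forall i, compat I (a i)) (x_compat : compat I x).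

Let I_lideal t : is_left_ideal (I t) := proj1 (I_ideal t).

Definition lincomb t (r : 'I_n -> R) := \sum_(i < n) r i * a i t.
Definition solution t r := I t (x t - lincomb t r).
Definition syzygy t z := I t (lincomb t z).
Definition syzygy_mod s t v := exists2 z, syzygy t z & forall i, I s (z i - v i).
Definition liftable s e :=
  forall t, exists2 r, solution t r & forall i, I s (r i - e i).

Hypothesis x_solvable : forall t, exists r, solution t r.

Lemma lincombB t r r' :
  lincomb t (fun i => r i - r' i) = lincomb t r - lincomb t r'.
Proof. by rewrite -sumrB; apply: eq_bigr => i _; rewrite mulrBl. Qed.

Lemma lincombD t r r' :
  lincomb t (fun i => r i + r' i) = lincomb t r + lincomb t r'.
Proof. by rewrite -big_split; apply: eq_bigr => i _; rewrite mulrDl. Qed.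

Lemma lincombMl t c r : lincomb t (fun i => c * r i) = c * lincomb t r.
Proof. by rewrite mulr_sumr; apply: eq_bigr => i _; rewrite mulrA. Qed.

Lemma lincomb0 t : lincomb t (fun _ => 0) = 0.
Proof. by apply: big1 => i _; rewrite mul0r. Qed.

Lemma lincomb_succ t r : I t (lincomb t.+1 r - lincomb t r).
Proof.
rewrite /lincomb -sumrB; apply: lideal_sum => // i.
by rewrite -mulrBr; apply: lidealMl => //; apply: a_compat.
Qed.

Lemma lincomb_eqmod t r r' : (forall i, I t (r i - r' i)) ->
  I t (lincomb t r - lincomb t r').
Proof.
have [_ [_ [_ I_mulr]]] := I_ideal t.
by move=> rr'; rewrite -lincombB; apply: lideal_sum => // i; apply: I_mulr.
Qed.

Lemma solution_succ t r : solution t.+1 r -> solution t r.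
Proof.
move=> sol.
apply: (eqmod_trans (I_lideal t) (eqmod_sym (I_lideal t) (x_compat t))).
exact: (eqmod_trans (I_lideal t) (I_succ sol) (lincomb_succ t r)).
Qed.

Lemma solution_le t t' r : (t <= t')%N -> solution t' r -> solution t r.
Proof. exact: (@downward_closed_le (solution^~ r) (solution_succ^~ r)). Qed.

Lemma syzygy_succ t z : syzygy t.+1 z -> syzygy t z.
Proof.
move=> /I_succ syz; rewrite /syzygy.
have -> : lincomb t z = lincomb t.+1 z - (lincomb t.+1 z - lincomb t z).
  by rewrite opprB addrC subrK.
by apply: lidealB => //; apply: lincomb_succ.
Qed.

Lemma solutionB_syzygy t r r' : solution t r -> solution t r' ->
  syzygy t (fun i => r i - r' i).
Proof.
move=> sol sol'; rewrite /syzygy lincombB -[_ - _]opprB.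
apply: lidealN => //.
exact: (eqmod_trans (I_lideal t) (eqmod_sym (I_lideal t) sol')) sol.
Qed.

Lemma solutionD_syzygy t r z : solution t r -> syzygy t z ->
  solution t (fun i => r i + z i).
Proof.
by move=> sol syz; rewrite /solution lincombD opprD addrA; apply: lidealB.
Qed.

Lemma syzygy_mod_stable s :
  exists N, forall t, (N <= t)%N -> forall v, syzygy_mod s t v <-> syzygy_mod s N v.
Proof.
have syz0 t : syzygy t (fun _ => 0) by rewrite /syzygy lincomb0; apply: lideal0.
apply: (left_artinian_quot_pow (I_lideal s) (@I_art s) (M := syzygy_mod s))
  => [t | t v Iv | t v [z syz zv]].
- split.
  + by exists (fun _ => 0) => // i; apply: eqmod_refl.
  + move=> v1 v2 [z1 syz1 zv1] [z2 syz2 zv2]; exists (fun i => z1 i - z2 i).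
      by rewrite /syzygy lincombB; apply: lidealB.
    by move=> i; apply: eqmodB.
  + move=> c v [z syz zv]; exists (fun i => c * z i).
      by rewrite /syzygy lincombMl; apply: lidealMl.
    by move=> i; rewrite -mulrBr; apply: lidealMl.
- by exists (fun _ => 0) => // i; rewrite sub0r; apply: lidealN.
- by exists z => //; apply: syzygy_succ.
Qed.

Lemma solution_stable_liftable s N r :
  (forall t, (N <= t)%N -> forall v, syzygy_mod s t v <-> syzygy_mod s N v) ->
  solution N r -> liftable s r.
Proof.
move=> stable sol t; case: (leqP t N) => [le_tN | /ltnW le_Nt].
  by exists r => [|i]; [apply: solution_le sol | apply: eqmod_refl].
have [f solf] := x_solvable t.
have : syzygy_mod s N (fun i => r i - f i).
  exists (fun i => r i - f i) => [|i]; last exact: eqmod_refl.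
  exact: solutionB_syzygy sol (solution_le le_Nt solf).
move=> /(stable _ le_Nt) [z syz zrf]; exists (fun i => f i + z i).
  exact: solutionD_syzygy.
by move=> i; rewrite [f i + _]addrC -addrA -opprB; apply: zrf.
Qed.

Lemma liftable_exists s : exists e, liftable s e.
Proof.
have [N stable] := syzygy_mod_stable s; have [r sol] := x_solvable N.
by exists r; apply: solution_stable_liftable stable sol.
Qed.

Lemma liftable_succ s e : liftable s e ->
  exists2 e', liftable s.+1 e' & forall i, I s (e' i - e i).
Proof.
have [N stable] := syzygy_mod_stable s.+1.
move=> /(_ N) [r sol re]; exists r => //.
exact: solution_stable_liftable stable sol.
Qed.

Lemma compatible_solution : exists2 r : 'I_n -> nat -> R,
  forall i, compat I (r i) & ceq I x (fun j => lincomb j (fun i => r i j)).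
Proof.
have [e /= e_spec] := dependent_choice_nat (liftable_exists 0) liftable_succ.
exists (fun i j => e j i) => [i j | j]; first exact: (e_spec j).2.
have [r sol re] := (e_spec j).1 j.
exact: (eqmod_trans (I_lideal j) sol) (lincomb_eqmod re).
Qed.

End CompatibleSolution.

Lemma fg_left_ideal_closed (R : nzRingType) (I : nat -> R -> Prop) :
  (forall t, is_ideal (I t)) -> (forall t y, I t.+1 y -> I t y) ->
  (forall s, left_artinian_quot (I s)) ->
  forall n (a : 'I_n -> nat -> R), (forall i, compat I (a i)) ->
  closed_Rbar I (fg_left_ideal I a).
Proof.
move=> I_ideal I_succ I_art n a a_compat x x_compat x_adherent.
have I_lideal t : is_left_ideal (I t) by case: (I_ideal t).
have x_solvable t : exists r, solution I a x t r.
  have [y [_ [r [_ y_eq] yx]]] := x_adherent t.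
  exists (fun i => r i t); rewrite /solution /lincomb.
  exact: (eqmod_trans (I_lideal t) (eqmod_sym (I_lideal t) yx)) (y_eq t).
have [r r_compat x_eq] :=
  compatible_solution I_ideal I_succ I_art a_compat x_compat x_solvable.
by exists r.
Qed.

Lemma is_ideal_conv (R : nzRingType) (J : R -> Prop) :
  is_ideal J -> is_ideal (R := R^c) J.
Proof. by case=> J_lideal J_rideal; split. Qed.

Theorem lemma4p2 (F : comNzRingType) (R : algType F) (I : nat -> R -> Prop)
  (hI : is_filtration I)
  (hart : forall s, left_artinian_quot (I s) /\ right_artinian_quot (I s)) :
  (forall (n : nat) (a : 'I_n -> nat -> R), (forall i, compat I (a i)) ->
     closed_Rbar I (fg_left_ideal I a)) /\
  (forall (n : nat) (a : 'I_n -> nat -> R), (forall i, compat I (a i)) ->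
     closed_Rbar I (fg_right_ideal I a)).
Proof.
have [I_ideal _ I_succ _ _] := hI.
split; first exact: fg_left_ideal_closed I_ideal I_succ (fun s => (hart s).1).
exact: (@fg_left_ideal_closed R^c I (fun t => is_ideal_conv (I_ideal t)) I_succ
  (fun s => (hart s).2)).
Qed.
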